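(* (i) Let $G$ be a block graph with at least one cut-vertex, $\omega=\omega(G)$ and $\tilde{\Delta}=\tilde{\Delta}(G)$. Then $\Gamma(G)\le\tilde{\Delta}(\omega-1)+1$. (ii) For any integers $t\ge2$ and $p\ge2$ there exists a graph $G_{t,p}$ with $\tilde{\Delta}(G_{t,p})=t$, $\omega(G_{t,p})=p$ and $\Gamma(G_{t,p})=t(p-1)+1$.
   Context: A Grundy-coloring of a graph $G$ is a proper coloring with nonempty color classes $C_1,\ldots,C_k$ such that for $i<j$ each vertex of $C_j$ has a neighbor in $C_i$; $\Gamma(G)$ is the maximum number of colors of a Grundy-coloring. $\omega(G)$ is the clique number. A block is a maximal 2-connected subgraph or a bridge; a block graph is a graph all of whose blocks are complete. The block-cutpoint graph of $G$ is the bipartite graph with one part the set of cut-vertices of $G$ and the other part having a vertex $b_i$ for each block $B_i$, where a cut-vertex $v$ is adjacent to $b_i$ iff $v\in B_i$. $\tilde{\Delta}(G)$ is the maximum degree of a cut-vertex in the block-cutpoint graph, i.e. the maximum number of blocks containing a single cut-vertex. *)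

From mathcomp Require Import all_boot all_order.
Set Implicit Arguments. Unset Strict Implicit. Unset Printing Implicit Defensive.

Section Graphs.
Variables (T : finType) (e : rel T).

Definition simple_graph : Prop := symmetric e /\ irreflexive e.

Definition induced (S : {set T}) : rel T :=
  [rel x y | [&& e x y, x \in S & y \in S]].

Definition connected_set (S : {set T}) : bool :=
  [forall x in S, forall y in S, connect (induced S) x y].

Definition cut_vertex (v : T) : bool :=
  [exists x, exists y, [&& x != v, y != v, connect e x y &
     ~~ connect (induced [set~ v]) x y]].

Definition two_connected (S : {set T}) : bool :=
  [&& 2 < #|S|, connected_set S & [forall x in S, connected_set (S :\ x)]].

Definition edge_set (S : {set T}) : bool :=
  [exists u, exists v, (S == [set u; v]) && e u v].

Definition block_cand (S : {set T}) : bool := two_connected S || edge_set S.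

(* block: maximal 2-connected subgraph or bridge (maximal among the
   candidates; 2-connected subgraphs are induced, so vertex sets suffice) *)
Definition block (S : {set T}) : bool :=
  block_cand S && [forall S' : {set T}, (S \subset S') && block_cand S' ==> (S' == S)].

Definition clique (S : {set T}) : bool :=
  [forall x in S, forall y in S, (x != y) ==> e x y].

Definition block_graph : Prop := forall B : {set T}, block B -> clique B.

Definition has_cut_vertex : Prop := exists v, cut_vertex v.

Definition omega : nat := \max_(S : {set T} | clique S) #|S|.

Definition delta_tilde : nat :=
  \max_(v | cut_vertex v) #|[set B : {set T} | block B & v \in B]|.

(* Grundy colouring with colours 1..k (value 0 of 'I_k.+1 unused) *)
Definition grundy_coloring (k : nat) (c : {ffun T -> 'I_k.+1}) : bool :=
  [&& [forall x, 0 < c x],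
      [forall i : 'I_k.+1, (0 < i) ==> [exists x, c x == i]],
      [forall x, forall y, e x y ==> (c x != c y)] &
      [forall x, forall i : 'I_k.+1,
          (0 < i < c x) ==> [exists y, e x y && (c y == i)]]].

Definition has_grundy (k : nat) : bool :=
  [exists c : {ffun T -> 'I_k.+1}, grundy_coloring c].

(* Grundy number: a Grundy colouring has at most #|T| (nonempty) classes *)
Definition grundy_number : nat :=
  \max_(k < #|T|.+1 | has_grundy k) k.

End Graphs.

(* A vertex of the largest colour of a Grundy colouring has neighbours of all
   smaller colours, so the Grundy number is at most the maximum degree plus one.  In a block
   graph every neighbour of u lies in a block through u, which is a clique, so
   deg u <= b(u) (omega - 1) where b(u) is the number of blocks containing u; moreover
   b(u) <= delta_tilde if u is a cut vertex and b(u) <= 1 otherwise.  Blocks through u are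
   counted by the neighbours of u they contain: two blocks sharing two vertices coincide, and
   two neighbours of u joined by a path avoiding u close a cycle through u, which is
   2-connected and hence inside a single block.

   Let m = p - 1.  The graph G_{t,p} has a root joined to t disjoint cliques
   W_0, ..., W_(t-1) of size m, and W_i is completely joined to one side of a crown graph
   (K_(im,im) minus a perfect matching).  Colouring both sides of the crown with 1, ..., im,
   W_i with im + 1, ..., im + m and the root with tm + 1 is a Grundy colouring in which every
   neighbourhood is rainbow, so the maximum degree is at most tm and the Grundy number is
   tm + 1.  The root is a cut vertex lying in the t blocks through the W_i, and no vertex
   lies in more than t blocks.  Finally [slot] properly colours G_{t,p} with m + 1 colours
   and the root together with W_0 is a clique, so omega = p. *)

From HB Require Import structures.
From mathcomp Require Import all_boot all_order.
From mathcomp Require Import zify.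
Set Implicit Arguments. Unset Strict Implicit. Unset Printing Implicit Defensive.

Section GrundyDegree.
Variables (T : finType) (e : rel T).

Lemma grundy_coloring_le_card k (c : {ffun T -> 'I_k.+1}) :
  grundy_coloring e c -> k <= #|T|.
Proof.
case/and4P=> _ /forall_inP onto _ _.
have sub : [set~ ord0] \subset c @: [set: T].
  apply/subsetP=> i; rewrite in_setC1 -lt0n => /onto /existsP[x /eqP <-].
  exact: imset_f.
have := subset_leq_card sub; rewrite cardsC1 card_ord /= => /leq_trans; apply.
by rewrite -cardsT leq_imset_card.
Qed.

Lemma grundy_coloring_le_deg k (c : {ffun T -> 'I_k.+1}) d :
  (forall x, #|[set y | e x y]| <= d) -> grundy_coloring e c -> k <= d.+1.
Proof.
move=> deg_le /and4P[_ /forall_inP onto _ /forallP grundy].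
case: k c onto grundy => // k c onto grundy.
have /existsP[x /eqP cx] := onto ord_max isT.
have sub : [set~ ord0] :\ ord_max \subset c @: [set y | e x y].
  apply/subsetP=> i; rewrite !inE -lt0n => /andP[imax i0].
  have ix : 0 < i < c x.
    by rewrite cx i0 /= ltn_neqAle -ltnS ltn_ord andbT; rewrite -val_eqE in imax.
  have /existsP[y /andP[exy /eqP <-]] := implyP (forallP (grundy x) i) ix.
  by apply: imset_f; rewrite inE.
have := cardsD1 (ord_max : 'I_k.+2) [set~ ord0]; rewrite cardsC1 card_ord !inE /=.
move=> [->]; apply: leq_trans (subset_leq_card sub) _.
exact: leq_trans (leq_imset_card _ _) (deg_le x).
Qed.

Lemma grundy_number_le_deg d :
  (forall x, #|[set y | e x y]| <= d) -> grundy_number e <= d.+1.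
Proof. by move=> deg_le; apply/bigmax_leqP=> k /existsP[c /(grundy_coloring_le_deg deg_le)]. Qed.

Lemma has_grundy_le k : has_grundy e k -> k <= grundy_number e.
Proof.
move=> gk; have /existsP[c /grundy_coloring_le_card] := gk; rewrite -ltnS => k_lt.
exact: (@leq_bigmax_cond _ _ _ (Ordinal k_lt)).
Qed.

End GrundyDegree.

Section Connectivity.
Variables (T : finType) (e : rel T).
Hypothesis e_sym : symmetric e.
Implicit Types (A B : {set T}) (x y z : T).

Lemma induced_sym A : symmetric (induced e A).
Proof. by move=> x y; rewrite /induced /= e_sym [(y \in A) && _]andbC. Qed.

Lemma connect_inducedC A x y :
  connect (induced e A) x y = connect (induced e A) y x.
Proof. exact/sym_connect_sym/induced_sym. Qed.

Lemma connect_induced1 A x y :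
  e x y -> x \in A -> y \in A -> connect (induced e A) x y.
Proof. by move=> exy xA yA; apply: connect1; rewrite /induced /= exy xA yA. Qed.

Lemma connect_inducedS A B x y :
  A \subset B -> connect (induced e A) x y -> connect (induced e B) x y.
Proof.
move=> sAB; apply: connect_sub => a b /and3P[eab aA bA].
by apply: connect_induced1; rewrite ?(subsetP sAB).
Qed.

Lemma connected_setP A :
  reflect {in A &, forall x y, connect (induced e A) x y} (connected_set e A).
Proof.
apply: (iffP forall_inP) => [conn x y xA yA | conn x xA].
  exact: (forall_inP (conn x xA) y yA).
by apply/forall_inP=> y yA; apply: conn.
Qed.

Lemma connected_set_to A z :
  z \in A -> {in A, forall x, connect (induced e A) x z} -> connected_set e A.
Proof.
move=> zA to_z; apply/connected_setP=> x y xA yA.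
by apply: connect_trans (to_z x xA) _; rewrite connect_inducedC to_z.
Qed.

Lemma connected_setU A B z : connected_set e A -> connected_set e B ->
  z \in A -> z \in B -> connected_set e (A :|: B).
Proof.
move=> /connected_setP cA /connected_setP cB zA zB.
apply: (connected_set_to (z := z)); first by rewrite inE zA.
move=> x; rewrite inE => /orP[xA | xB].
  by apply: connect_inducedS (subsetUl A B) (cA _ _ xA zA).
by apply: connect_inducedS (subsetUr A B) (cB _ _ xB zB).
Qed.

Lemma path_induced_subset A x p : path (induced e A) x p -> {subset p <= A}.
Proof.
elim: p x => //= y p IHp x /andP[/and3P[_ _ yA] /IHp sub] z.
by rewrite inE => /predU1P[-> // | /sub].
Qed.

Lemma nth_last_cons x p : nth x (x :: p) (size p) = last x p.
Proof. by rewrite -[RHS]/(last x (x :: p)) -nth_last. Qed.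

Lemma connect_walk A x p i j : path e x p -> i <= j <= size p ->
    (forall k, i <= k <= j -> nth x (x :: p) k \in A) ->
  connect (induced e A) (nth x (x :: p) i) (nth x (x :: p) j).
Proof.
move=> /(pathP x) walk; elim: j => [|j IHj] /andP[ij jp] inA.
  by rewrite leqn0 in ij; rewrite (eqP ij).
have [-> // | neq_ij] := eqVneq i j.+1.
have ij' : i <= j by lia.
apply: connect_trans (IHj _ _) (connect_induced1 (walk j jp) _ _).
- by rewrite ij' ltnW.
- by move=> k /andP[ik kj]; apply: inA; rewrite ik ltnW.
- by apply: inA; rewrite ij' leqnSn.
- by apply: (inA j.+1); rewrite leqnn andbT ltnW.
Qed.

Lemma connect_walk_head A x p k : path e x p -> k <= size p ->
    (forall l, l <= k -> nth x (x :: p) l \in A) ->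
  connect (induced e A) (nth x (x :: p) k) x.
Proof.
move=> walk kp inA; rewrite connect_inducedC.
by apply: (connect_walk (i := 0)) => // l /andP[_]; apply: inA.
Qed.

Lemma connect_walk_last A x p k : path e x p -> k <= size p ->
    (forall l, k <= l <= size p -> nth x (x :: p) l \in A) ->
  connect (induced e A) (nth x (x :: p) k) (last x p).
Proof.
move=> walk kp inA; rewrite -nth_last_cons.
by apply: connect_walk; rewrite ?kp ?leqnn.
Qed.

End Connectivity.

Section Blocks.
Variables (T : finType) (e : rel T).
Hypotheses (e_sym : symmetric e) (e_irr : irreflexive e).
Implicit Types (A B S : {set T}) (a b u x y z : T).

Definition blocks_at u := [set B | block e B & u \in B].

Lemma edge_neq x y : e x y -> x != y.
Proof. by apply: contraTneq => ->; rewrite e_irr. Qed.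

Section Cycle.
Variables (u x : T) (p : seq T).
Hypotheses (walk : path e x p) (s_uniq : uniq (x :: p)) (u_notin : u \notin x :: p).
Hypotheses (eux : e u x) (eul : e u (last x p)).
Local Notation s := (x :: p).
Local Notation S := (u |: [set y in x :: p]).

Lemma cycle_nth_in k : k <= size p -> nth x s k \in S.
Proof. by move=> kp; rewrite in_setU1 in_set mem_nth ?orbT. Qed.

Lemma index_cycle_le y : y \in s -> index y s <= size p.
Proof. by rewrite -ltnS -index_mem. Qed.

Lemma cycle_nth_neq z l : z \in s -> l <= size p -> l != index z s -> nth x s l != z.
Proof.
move=> zs lp; apply: contraNneq => nth_z.
by rewrite -(nth_uniq x _ _ s_uniq) ?nth_z ?nth_index ?index_mem.
Qed.

Lemma cycle_connect_head A k : u \in A -> k <= size p ->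
  (forall l, l <= k -> nth x s l \in A) -> connect (induced e A) (nth x s k) u.
Proof.
move=> uA kp inA; apply: connect_trans (connect_walk_head e_sym walk kp inA) _.
by apply: connect_induced1 _ (inA 0 _) uA; rewrite // e_sym.
Qed.

Lemma cycle_connect_last A k : u \in A -> k <= size p ->
  (forall l, k <= l <= size p -> nth x s l \in A) -> connect (induced e A) (nth x s k) u.
Proof.
move=> uA kp inA; apply: connect_trans (connect_walk_last walk kp inA) _.
have lA : last x p \in A by rewrite -nth_last_cons; apply: inA; rewrite kp leqnn.
by apply: connect_induced1 _ lA uA; rewrite e_sym.
Qed.

Lemma cycle_connected : connected_set e S.
Proof.
apply: (connected_set_to e_sym (setU11 _ _)) => y; rewrite in_setU1 in_set.
case/predU1P=> [-> // | ys]; rewrite -(nth_index x ys).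
apply: cycle_connect_head (setU11 _ _) (index_cycle_le ys) _ => l lk.
exact/cycle_nth_in/(leq_trans lk (index_cycle_le ys)).
Qed.

Lemma cycle_connected_setD1_apex : connected_set e (S :\ u).
Proof.
have xu : x != u by apply: contraNneq u_notin => <-; apply: mem_head.
have xS : x \in S :\ u by rewrite in_setD1 xu in_setU1 in_set mem_head orbT.
apply: (connected_set_to e_sym xS) => y; rewrite in_setD1 in_setU1 in_set.
case/andP=> yu /predU1P[y_u | ys]; first by rewrite y_u eqxx in yu.
rewrite -(nth_index x ys); apply: connect_walk_head (index_cycle_le ys) _ => // l lk.
have lp := leq_trans lk (index_cycle_le ys).
by rewrite in_setD1 cycle_nth_in // andbT; apply: contraNneq u_notin => <-; apply: mem_nth.
Qed.

Lemma cycle_connected_setD1 z : z \in s -> connected_set e (S :\ z).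
Proof.
move=> zs; have uSz : u \in S :\ z.
  by rewrite in_setD1 setU11 andbT; apply: contraNneq u_notin => ->.
have inSz l : l <= size p -> l != index z s -> nth x s l \in S :\ z.
  by move=> lp lz; rewrite in_setD1 cycle_nth_in // andbT cycle_nth_neq.
apply: (connected_set_to e_sym uSz) => y; rewrite in_setD1 in_setU1 in_set.
case/andP=> yz /predU1P[-> // | ys]; have yp := index_cycle_le ys.
rewrite -(nth_index x ys); have [lt_yz | lt_zy | eq_yz] := ltngtP (index y s) (index z s).
- apply: (cycle_connect_head uSz (index_cycle_le ys)) => l ly.
  by apply: inSz; [exact: leq_trans ly yp | rewrite neq_ltn (leq_ltn_trans ly lt_yz)].
- apply: (cycle_connect_last uSz (index_cycle_le ys)) => l /andP[yl lp].
  by apply: inSz; rewrite // neq_ltn (leq_trans lt_zy yl) orbT.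
- by move: yz; rewrite -(nth_index x ys) eq_yz nth_index ?eqxx.
Qed.

Lemma two_connected_cycle : x != last x p -> two_connected e S.
Proof.
move=> x_neq_l; apply/and3P; split; first 1 last.
- exact: cycle_connected.
- apply/forall_inP=> z; rewrite in_setU1 in_set => /predU1P[-> | zs].
    exact: cycle_connected_setD1_apex.
  exact: cycle_connected_setD1.
rewrite cardsU1 in_set u_notin cardsE (card_uniqP s_uniq) /= add1n !ltnS lt0n.
by apply: contra x_neq_l => /nilP ->.
Qed.

End Cycle.

Lemma two_connectedU (S1 S2 : {set T}) x y : two_connected e S1 -> two_connected e S2 ->
  x != y -> x \in S1 -> y \in S1 -> x \in S2 -> y \in S2 -> two_connected e (S1 :|: S2).
Proof.
move=> tc1 tc2 xy x1 y1 x2 y2.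
have del S z : two_connected e S -> connected_set e (S :\ z).
  case/and3P=> _ connS /forall_inP delS.
  by have [/delS // | zS] := boolP (z \in S); rewrite (setDidPl _) // disjoint_sym disjoints1.
case/and3P: (tc1) (tc2) => card1 conn1 _ /and3P[_ conn2 _].
apply/and3P; split.
- exact: leq_trans card1 (subset_leq_card (subsetUl _ _)).
- exact: (connected_setU e_sym conn1 conn2 x1 x2).
apply/forall_inP=> z _; rewrite setDUl.
have [zx | zx] := eqVneq z x.
  apply: (connected_setU e_sym (del _ z tc1) (del _ z tc2) (z := y));
    by rewrite in_setD1 ?y1 ?y2 zx eq_sym xy.
apply: (connected_setU e_sym (del _ z tc1) (del _ z tc2) (z := x));
  by rewrite in_setD1 ?x1 ?x2 eq_sym zx.
Qed.

Lemma edge_set_subset S1 S2 x y : edge_set e S1 -> x != y ->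
  x \in S1 -> y \in S1 -> x \in S2 -> y \in S2 -> S1 \subset S2.
Proof.
move=> /existsP[a /existsP[b /andP[/eqP-> _]]] xy; rewrite !inE => xab yab x2 y2.
apply/subsetP=> z; rewrite !inE.
by case/orP: xab yab xy => /eqP<- /orP[]/eqP<-; rewrite ?eqxx // => _ /orP[]/eqP->.
Qed.

Lemma block_candU S1 S2 x y : block_cand e S1 -> block_cand e S2 -> x != y ->
  x \in S1 -> y \in S1 -> x \in S2 -> y \in S2 -> block_cand e (S1 :|: S2).
Proof.
move=> /orP[tc1 | es1] /orP[tc2 | es2] xy x1 y1 x2 y2.
- by rewrite /block_cand (two_connectedU tc1 tc2 xy).
- by rewrite (setUidPl (edge_set_subset es2 xy x2 y2 x1 y1)) /block_cand tc1.
- by rewrite (setUidPr (edge_set_subset es1 xy x1 y1 x2 y2)) /block_cand tc2.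
- by rewrite (setUidPr (edge_set_subset es1 xy x1 y1 x2 y2)) /block_cand es2 orbT.
Qed.

Lemma block_eq B1 B2 x y : block e B1 -> block e B2 -> x != y ->
  x \in B1 -> y \in B1 -> x \in B2 -> y \in B2 -> B1 = B2.
Proof.
move=> /andP[c1 /forallP max1] /andP[c2 /forallP max2] xy x1 y1 x2 y2.
have cU := block_candU c1 c2 xy x1 y1 x2 y2.
move: (max1 (B1 :|: B2)) (max2 (B1 :|: B2)); rewrite subsetUl subsetUr cU /=.
by move=> /eqP h1 /eqP h2; rewrite -[LHS]h1.
Qed.

Lemma block_cand_subset_block S : block_cand e S -> exists2 B, block e B & S \subset B.
Proof.
move=> cS; have S_ok : (S \subset S) && block_cand e S by rewrite subxx cS.
have [B /andP[SB cB] B_max] :=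
  @arg_maxnP _ S (fun B => (S \subset B) && block_cand e B) (fun B => #|B|) S_ok.
exists B => //; apply/andP; split=> //; apply/forallP=> B'; apply/implyP=> /andP[BB' cB'].
by rewrite eq_sym eqEcard BB'; apply: B_max; rewrite cB' (subset_trans SB BB').
Qed.

Lemma edge_block_cand x y : e x y -> block_cand e [set x; y].
Proof.
by move=> exy; apply/orP; right; apply/existsP; exists x; apply/existsP; exists y; rewrite eqxx.
Qed.

Lemma edge_subset_block x y : e x y -> exists2 B, block e B & (x \in B) && (y \in B).
Proof.
move/edge_block_cand/block_cand_subset_block=> [B bB sB].
by exists B; rewrite // !(subsetP sB) ?set21 ?set22.
Qed.

Lemma block_cand_nbr S u : block_cand e S -> u \in S -> exists2 a, a \in S & e u a.
Proof.
case/orP=> [/and3P[big /connected_setP conn _] | /existsP[a /existsP[b /andP[/eqP-> eab]]]] uS.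
  have /card_gt0P[z] : 0 < #|S :\ u|.
    by move: big; rewrite (cardsD1 u S) uS add1n ltnS => /ltnW.
  rewrite in_setD1 => /andP[zu zS].
  have /connectP[[|a q] /= walk z_eq] := conn u z uS zS; first by rewrite z_eq eqxx in zu.
  by case/andP: walk => /and3P[eua _ aS] _; exists a.
move: uS; rewrite !inE => /orP[]/eqP->; first by exists b; rewrite ?inE ?eqxx ?orbT.
by exists a; rewrite ?inE ?eqxx // e_sym.
Qed.

Lemma block_cand_connect_setC1 S u a b : block_cand e S -> u \in S -> a \in S -> b \in S ->
  a != u -> b != u -> connect (induced e [set~ u]) a b.
Proof.
case/orP=> [/and3P[_ _ /forall_inP del] | /existsP[v /existsP[w /andP[/eqP-> _]]]] uS aS bS au bu.
  apply: (@connect_inducedS _ _ (S :\ u)); first by rewrite setDE subsetIr.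
  by apply: (connected_setP _ _ (del u uS)); rewrite in_setD1 ?au ?bu.
move: uS aS bS au bu; rewrite !inE.
by move=> /orP[]/eqP-> /orP[]/eqP-> /orP[]/eqP->; rewrite ?eqxx ?connect0.
Qed.

Lemma block_through_cycle u a b : e u a -> e u b -> a != b ->
  connect (induced e [set~ u]) a b -> exists2 B, block e B & [&& u \in B, a \in B & b \in B].
Proof.
move=> eua eub ab /connectP[p walk_u b_last]; subst b.
have walk : path e a p by apply: sub_path walk_u => x y /and3P[].
have notin_p : u \notin p.
  by apply/negP=> /(path_induced_subset walk_u); rewrite in_setC1 eqxx.
move: eub ab; case: (shortenP walk) => q walk_q q_uniq q_sub eub ab.
have u_notin : u \notin a :: q.
  rewrite inE negb_or; apply/andP; split; first exact: edge_neq eua.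
  by apply: contra notin_p => /q_sub.
have cycle_cand : block_cand e (u |: [set y in a :: q]).
  by rewrite /block_cand (two_connected_cycle walk_q q_uniq u_notin eua eub ab).
have [B bB sB] := block_cand_subset_block cycle_cand.
by exists B; rewrite // !(subsetP sB) // !in_setU1 !in_set ?eqxx ?mem_head ?mem_last ?orbT.
Qed.

Lemma card_blocks_at_le (C : finType) (cls : T -> C) u :
    (forall a b, e u a -> e u b -> cls a = cls b -> connect (induced e [set~ u]) a b) ->
  #|blocks_at u| <= #|C|.
Proof.
(* A block at [u] is represented by a neighbour of [u] in it; two representatives of the
   same class lie with [u] on a cycle, hence in one block. *)
move=> cls_conn; pose nbr B := odflt u [pick a in B | e u a].
have nbrP B : B \in blocks_at u -> (nbr B \in B) && e u (nbr B).
  rewrite inE => /andP[/andP[cB _] uB]; rewrite /nbr; case: pickP => [a // | none].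
  by have [a aB eua] := block_cand_nbr cB uB; move: (none a); rewrite /= aB eua.
have inj : {in blocks_at u &, injective (cls \o nbr)}.
  move=> B1 B2 B1u B2u /= same.
  have /andP[n1 e1] := nbrP _ B1u; have /andP[n2 e2] := nbrP _ B2u.
  move: B1u B2u; rewrite !inE => /andP[b1 u1] /andP[b2 u2].
  have n1u := edge_neq e1; rewrite eq_sym in n1u.
  have n2u := edge_neq e2; rewrite eq_sym in n2u.
  have [eq_n | neq_n] := eqVneq (nbr B1) (nbr B2).
    by apply: (block_eq b1 b2 n1u n1 u1 _ u2); rewrite eq_n.
  have [B3 b3 /and3P[u3 n13 n23]] := block_through_cycle e1 e2 neq_n (cls_conn _ _ e1 e2 same).
  by rewrite -(block_eq b3 b1 n1u n13 u3 n1 u1) (block_eq b3 b2 n2u n23 u3 n2 u2).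
by rewrite -(card_in_imset inj) max_card.
Qed.

Lemma card_blocks_at_ge k u (f : 'I_k -> T) : (forall i, e u (f i)) ->
    (forall i j, connect (induced e [set~ u]) (f i) (f j) -> i = j) ->
  k <= #|blocks_at u|.
Proof.
move=> nbr_f sep_f.
have /fin_all_exists[g gP] i : exists B, (B \in blocks_at u) && (f i \in B).
  have [B bB /andP[uB fB]] := edge_subset_block (nbr_f i).
  by exists B; rewrite inE bB uB fB.
have g_inj : injective g.
  move=> i j gij; apply: sep_f.
  have /andP[] := gP i; rewrite inE => /andP[/andP[cB _] uB] fiB.
  have /andP[_ fjB] := gP j; rewrite -gij in fjB.
  by apply: (block_cand_connect_setC1 cB uB fiB fjB); rewrite eq_sym edge_neq.
have sub : g @: [set: 'I_k] \subset blocks_at u.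
  by apply/subsetP=> _ /imsetP[i _ ->]; case/andP: (gP i).
by have := subset_leq_card sub; rewrite card_imset // cardsT card_ord.
Qed.

Lemma card_blocks_at_le1 u :
  (forall a b, e u a -> e u b -> connect (induced e [set~ u]) a b) -> #|blocks_at u| <= 1.
Proof.
move=> conn; have := @card_blocks_at_le unit (fun=> tt) u.
by rewrite card_unit; apply=> a b *; apply: conn.
Qed.

Lemma card_blocks_at_noncut u : ~~ cut_vertex e u -> #|blocks_at u| <= 1.
Proof.
move=> /existsPn noncut; apply: card_blocks_at_le1 => a b eua eub.
have au : a != u by rewrite eq_sym edge_neq.
have bu : b != u by rewrite eq_sym edge_neq.
have cab : connect e a b by apply: connect_trans (connect1 _) (connect1 eub); rewrite e_sym.
by move/existsPn: (noncut a) => /(_ b); rewrite au bu cab => /negbNE.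
Qed.

Lemma cut_vertex_nbr u : cut_vertex e u -> exists a, e u a.
Proof.
case: (pickP (e u)) => [a eua _ | none]; first by exists a.
case/existsP=> x /existsP[y /and4P[_ _ cxy /negP[]]].
apply: connect_sub cxy => a b eab; rewrite (connect_induced1 eab) // in_setC1.
  by apply: contraTneq eab => ->; rewrite none.
by apply: contraTneq eab => ->; rewrite e_sym none.
Qed.

Lemma blocks_at_cut_gt0 u : cut_vertex e u -> 0 < #|blocks_at u|.
Proof.
case/cut_vertex_nbr=> a eua.
by apply: (card_blocks_at_ge (f := fun _ : 'I_1 => a)) => // i j _; rewrite !ord1.
Qed.

Lemma card_blocks_at_le_delta u : has_cut_vertex e -> #|blocks_at u| <= delta_tilde e.
Proof.
case=> v cut_v; have le_delta w : cut_vertex e w -> #|blocks_at w| <= delta_tilde e.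
  exact: (@leq_bigmax_cond _ (cut_vertex e) (fun w => #|blocks_at w|) w).
have [/le_delta // | /card_blocks_at_noncut le1] := boolP (cut_vertex e u).
exact: leq_trans le1 (leq_trans (blocks_at_cut_gt0 cut_v) (le_delta _ cut_v)).
Qed.

Lemma card_nbhd_le_blocks u : block_graph e ->
  #|[set y | e u y]| <= #|blocks_at u| * (omega e - 1).
Proof.
move=> bg; set P := [set B :\ u | B in blocks_at u].
have sub : [set y | e u y] \subset cover P.
  apply/subsetP=> y; rewrite inE => euy.
  have [B bB /andP[uB yB]] := edge_subset_block euy.
  apply/bigcupP; exists (B :\ u); first by apply: imset_f; rewrite inE bB.
  by rewrite in_setD1 yB andbT eq_sym edge_neq.
apply: leq_trans (subset_leq_card sub) (leq_trans (leq_card_cover P) _).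
apply: leq_trans (leq_mul (leq_imset_card _ _) (leqnn _)); rewrite -sum_nat_const.
apply: leq_sum => A /imsetP[B]; rewrite inE => /andP[bB uB] ->.
have := cardsD1 u B; rewrite uB add1n => card_B.
have : #|B| <= omega e by apply: (@leq_bigmax_cond _ (clique e) (fun S => #|S|) B); apply: bg.
by rewrite card_B; lia.
Qed.

End Blocks.

Theorem grundy_number_block_graph (T : finType) (e : rel T) :
  simple_graph e -> block_graph e -> has_cut_vertex e ->
  grundy_number e <= delta_tilde e * (omega e - 1) + 1.
Proof.
move=> [e_sym e_irr] bg cut; rewrite addn1; apply: grundy_number_le_deg => x.
apply: leq_trans (card_nbhd_le_blocks e_irr x bg) _.
by rewrite leq_mul2r card_blocks_at_le_delta ?orbT.
Qed.

Section Construction.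
Variables t0 m0 : nat.
Local Notation t := t0.+2.
Local Notation m := m0.+1.
Local Notation n := (t * m).

(* [Cliq i j] is the j-th vertex of W_i and [Crown i d b], for [d < i * m], is the vertex d
   of side b of the i-th crown graph, side [true] being joined to W_i; the [Crown] vertices
   with [d >= i * m] are isolated padding keeping the vertex type uniform. *)
Inductive vertex := Root | Cliq of 'I_t & 'I_m | Crown of 'I_t & 'I_n.+1 & bool.

Definition vertex_code (x : vertex) : option ('I_t * ('I_m + 'I_n.+1 * bool)) :=
  match x with
  | Root => None
  | Cliq i j => Some (i, inl j)
  | Crown i d b => Some (i, inr (d, b))
  end.

Definition vertex_decode (c : option ('I_t * ('I_m + 'I_n.+1 * bool))) : vertex :=
  match c with
  | None => Root
  | Some (i, inl j) => Cliq i j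
  | Some (i, inr (d, b)) => Crown i d b
  end.

Lemma vertex_codeK : cancel vertex_code vertex_decode. Proof. by case. Qed.

HB.instance Definition _ := Finite.copy vertex (can_type vertex_codeK).

Definition arc (x y : vertex) : bool :=
  match x, y with
  | Root, Cliq _ _ => true
  | Cliq i j, Cliq i' j' => (i == i') && (j != j')
  | Cliq i _, Crown i' d b => [&& i == i', b & d < i * m]
  | Crown i d b, Crown i' d' b' => [&& i == i', d != d', b != b', d < i * m & d' < i * m]
  | _, _ => false
  end.

Definition gtp (x y : vertex) : bool := arc x y || arc y x.

Lemma gtp_sym : symmetric gtp.
Proof. by move=> x y; rewrite /gtp orbC. Qed.

Lemma gtp_irr : irreflexive gtp.
Proof. by case=> [|i j|i d b]; rewrite /gtp /= ?eqxx ?andbF. Qed.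

Lemma nbr_root a : gtp Root a -> exists i j, a = Cliq i j.
Proof. by case: a => // i j _; exists i, j. Qed.

Lemma nbr_cliq i j a : gtp (Cliq i j) a ->
  [\/ a = Root, exists2 j', a = Cliq i j' & j' != j |
      exists2 d, a = Crown i d true & d < i * m].
Proof.
case: a => [|i' j'|i' d b]; rewrite /gtp /= ?orbF; first by constructor.
  by case/orP=> /andP[/eqP<- jj]; apply: Or32; exists j'; rewrite // eq_sym.
by case/and3P=> /eqP<- /idP b_true d_lt; apply: Or33; exists d; rewrite // b_true.
Qed.

Lemma nbr_crown i d b a : gtp (Crown i d b) a ->
  (exists2 j, a = Cliq i j & b && (d < i * m)) \/
  (exists2 d', a = Crown i d' (~~ b) & [&& d' != d, d < i * m & d' < i * m]).
Proof.
case: a => [|i' j|i' d' b']; rewrite /gtp /= ?orbF //.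
  by case/and3P=> /eqP<- b_true d_lt; left; exists j; rewrite ?b_true.
case/orP=> /and5P[/eqP<- dd bb d_lt d_lt']; right; exists d'.
- by case: b b' bb {dd} => [] [].
- by rewrite d_lt d_lt' eq_sym dd.
- by case: b b' bb {dd} => [] [].
- by rewrite d_lt d_lt' dd.
Qed.

Lemma part_end_le (i : 'I_t) : i * m + m <= n.
Proof. by rewrite -mulSnr leq_mul2r ltn_ord orbT. Qed.

Definition col (x : vertex) : nat :=
  match x with
  | Root => n.+1
  | Cliq i j => i * m + j + 1
  | Crown i d _ => if d < i * m then d + 1 else 1
  end.

(* [nbr_col x k] is the neighbour of [x] of colour [k]; it witnesses the Grundy condition
   ([nbr_colP]) and shows that neighbourhoods are rainbow ([nbr_colK]). *)
Definition nbr_in_part (i : 'I_t) (b : bool) (k : nat) : vertex :=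
  if k == n.+1 then Root
  else if k <= i * m then Crown i (inord (k - 1)) b
  else Cliq i (inord (k - 1 - i * m)).

Definition nbr_col (x : vertex) (k : nat) : vertex :=
  match x with
  | Root => Cliq (inord ((k - 1) %/ m)) (inord ((k - 1) %% m))
  | Cliq i _ => nbr_in_part i true k
  | Crown i _ b => nbr_in_part i (~~ b) k
  end.

Lemma nbr_in_part_crown (i : 'I_t) b k : 0 < k <= i * m ->
  nbr_in_part i b k = Crown i (inord (k - 1)) b /\ @inord n (k - 1) = k - 1 :> nat.
Proof.
have := part_end_le i => i_le k_le.
by rewrite /nbr_in_part ifN_eq ?ifT ?inordK; [| lia..].
Qed.

Lemma nbr_in_part_cliq (i : 'I_t) b k : i * m < k <= i * m + m ->
  nbr_in_part i b k = Cliq i (inord (k - 1 - i * m)) /\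
    @inord m0 (k - 1 - i * m) = k - 1 - i * m :> nat.
Proof.
have := part_end_le i => i_le k_le.
by rewrite /nbr_in_part ifN_eq ?ifN ?inordK; [| lia..].
Qed.

Lemma nbr_colP x k : 0 < k < col x -> gtp x (nbr_col x k) /\ col (nbr_col x k) = k.
Proof.
case: x => [|i j|i d b] /= /andP[k_gt0 k_lt].
- have k1_lt : (k - 1) %/ m < t by rewrite ltn_divLR //; lia.
  have := divn_eq (k - 1) m; have := ltn_pmod (k - 1) (ltn0Sn m0).
  by split=> //=; rewrite !inordK //; lia.
- have i_le := part_end_le i; have j_lt := ltn_ord j.
  have [k_le | k_gt] := leqP k (i * m).
    have k_rng : 0 < k <= i * m by rewrite k_gt0.
    have [-> dE] := nbr_in_part_crown true k_rng.
    by rewrite /gtp /= eqxx dE ifT; lia.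
  have k_rng : i * m < k <= i * m + m by rewrite k_gt /=; lia.
  have [-> jE] := nbr_in_part_cliq true k_rng.
  rewrite /gtp /= eqxx /= jE; split; last lia.
  by apply/orP; left; apply/eqP=> /(congr1 val) /=; rewrite jE; lia.
move: k_lt; case: ifP => [d_lt k_le | _]; last lia.
have k_rng : 0 < k <= i * m by rewrite k_gt0 /=; lia.
have [-> dE] := nbr_in_part_crown (~~ b) k_rng.
have dd : d != inord (k - 1) by apply/eqP=> /(congr1 val) /=; rewrite dE; lia.
by rewrite /gtp /= eqxx dd d_lt dE ifT; [split; [case: b; lia | lia] | lia].
Qed.

Lemma nbr_colK x y : gtp x y -> nbr_col x (col y) = y.
Proof.
have to_cliq (i : 'I_t) b (j : 'I_m) : nbr_in_part i b (i * m + j + 1) = Cliq i j.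
  have k_rng : i * m < i * m + j + 1 <= i * m + m by have := ltn_ord j; lia.
  have [-> jE] := nbr_in_part_cliq b k_rng.
  by congr Cliq; apply: val_inj; rewrite /= jE; lia.
have to_crown (i : 'I_t) b (d : 'I_n.+1) : d < i * m -> nbr_in_part i b (d + 1) = Crown i d b.
  move=> d_lt; have k_rng : 0 < d + 1 <= i * m by lia.
  have [-> dE] := nbr_in_part_crown b k_rng.
  by congr Crown; apply: val_inj; rewrite /= dE; lia.
case: x => [|i j|i d b] /=.
- case/nbr_root=> i [j ->] /=; rewrite addnK divnMDl // modnMDl divn_small // modn_small //.
  by rewrite addn0 !inord_val.
- case/nbr_cliq=> [-> | [j' -> _] | [d -> d_lt]] /=; last by rewrite d_lt to_crown.
    by rewrite /nbr_in_part eqxx.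
  exact: to_cliq.
case/nbr_crown=> [[j -> _] | [d' -> /and3P[_ _ d_lt]]] /=; first exact: to_cliq.
by rewrite d_lt to_crown.
Qed.

Lemma col_gt0 x : 0 < col x.
Proof. by case: x => [|i j|i d b] //=; try case: ifP; lia. Qed.

Lemma col_le x : col x <= n.+1.
Proof.
case: x => [|i j|i d b] //=; have := part_end_le i; first by have := ltn_ord j; lia.
by case: ifPn; lia.
Qed.

Definition coloring : {ffun vertex -> 'I_n.+2} := [ffun x => inord (col x)].

Lemma coloringE x : coloring x = col x :> nat.
Proof. by rewrite ffunE inordK // ltnS col_le. Qed.

Lemma gtp_col x y : gtp x y -> col x != col y.
Proof.
have neq_val k (a b : 'I_k) : a != b -> (a : nat) != b by [].
case: x => [|i j|i d b] /=.
- by case/nbr_root=> i [j ->] /=; have := part_end_le i; have := ltn_ord j; lia.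
- have i_le := part_end_le i; have j_lt := ltn_ord j.
  by case/nbr_cliq=> [-> | [j' -> /neq_val jj] | [d' -> d_lt]] /=; rewrite ?d_lt; lia.
case/nbr_crown=> [[j -> /andP[_ d_lt]] | [d' -> /and3P[/neq_val dd d_lt d_lt']]] /=.
  by rewrite d_lt; lia.
by rewrite d_lt d_lt'; lia.
Qed.

Lemma coloring_grundy : grundy_coloring gtp coloring.
Proof.
have coloring_eq x (k : 'I_n.+2) : col x = k -> coloring x == k.
  by move=> col_k; rewrite -val_eqE /= coloringE col_k.
apply/and4P; split.
- by apply/forallP=> x; rewrite coloringE col_gt0.
- apply/forallP=> k; apply/implyP=> k_gt0; apply/existsP.
  have [k_lt | k_ge] := ltnP k n.+1.
    have k_rng : 0 < k < col Root by rewrite k_gt0.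
    by have [_ /coloring_eq col_k] := nbr_colP k_rng; exists (nbr_col Root k).
  by exists Root; apply: coloring_eq; have := ltn_ord k; rewrite /=; lia.
- apply/forallP=> x; apply/forallP=> y; apply/implyP=> xy.
  by rewrite -val_eqE /= !coloringE gtp_col.
apply/forallP=> x; apply/forallP=> k; apply/implyP; rewrite coloringE => /nbr_colP[xy col_k].
by apply/existsP; exists (nbr_col x k); rewrite xy coloring_eq.
Qed.

Lemma card_nbhd_le x : #|[set y | gtp x y]| <= n.
Proof.
set N := [set y | gtp x y].
have inj : {in N &, injective coloring}.
  move=> y1 y2; rewrite !inE => xy1 xy2 /(congr1 val); rewrite /= !coloringE => same.
  by rewrite -(nbr_colK xy1) -(nbr_colK xy2) same.
have sub : coloring @: N \subset [set~ ord0] :\ coloring x.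
  apply/subsetP=> c /imsetP[y]; rewrite inE => xy ->.
  rewrite !inE -!(inj_eq val_inj) /= !coloringE -lt0n col_gt0 andbT.
  by rewrite eq_sym gtp_col.
have := subset_leq_card sub; rewrite (card_in_imset inj) => /leq_trans; apply.
have := cardsD1 (coloring x) [set~ ord0]; rewrite cardsC1 card_ord !inE.
by rewrite -(inj_eq val_inj) /= coloringE -lt0n col_gt0 add1n => -[<-].
Qed.

Lemma grundy_number_gtp : grundy_number gtp = n.+1.
Proof.
apply/eqP; rewrite eqn_leq grundy_number_le_deg //=; last exact: card_nbhd_le.
by apply: has_grundy_le; apply/existsP; exists coloring; apply: coloring_grundy.
Qed.

Definition slot (x : vertex) : option 'I_m :=
  match x with
  | Cliq _ j => Some j
  | Crown _ _ false => Some ord0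
  | _ => None
  end.

Lemma slot_nadj x y : x != y -> slot x = slot y -> ~~ gtp x y.
Proof.
case: x => [|i j|i d []]; case: y => [|i' j'|i' d' []] //=;
  rewrite /gtp /= ?andbF ?orbF //; by move=> _ [->]; rewrite eqxx !andbF.
Qed.

Lemma card_clique_le K : clique gtp K -> #|K| <= m.+1.
Proof.
move=> cK; have inj : {in K &, injective slot}.
  move=> x y xK yK same; apply/eqP; apply: contraT => xy.
  by move: (slot_nadj xy same); rewrite (implyP (forall_inP (forall_inP cK x xK) y yK) xy).
by rewrite -(card_in_imset inj) (leq_trans (max_card _)) // card_option card_ord.
Qed.

Lemma omega_gtp : omega gtp = m.+1.
Proof.
apply/eqP; rewrite eqn_leq; apply/andP; split; first exact/bigmax_leqP/card_clique_le.
pose K : {set vertex} := Root |: [set Cliq ord0 j | j : 'I_m].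
have cK : clique gtp K.
  apply/forall_inP=> x xK; apply/forall_inP=> y yK; apply/implyP.
  move: xK yK; rewrite !inE => /predU1P[-> | /imsetP[j _ ->]] /predU1P[-> | /imsetP[j' _ ->]] //.
  by move=> jj; rewrite /gtp /= ?eqxx; apply/orP; left; apply: contraNneq jj => ->.
have -> : m.+1 = #|K|.
  rewrite cardsU1 card_imset; last by move=> j j' [].
  rewrite card_ord; suff -> : Root \notin [set Cliq ord0 j | j : 'I_m] by [].
  by apply/negP=> /imsetP[].
by rewrite /omega; apply: (@leq_bigmax_cond _ (clique gtp) (fun S => #|S|) K).
Qed.

Definition part (x : vertex) : 'I_t :=
  match x with Root => ord0 | Cliq i _ => i | Crown i _ _ => i end.

Lemma gtp_part x y : x != Root -> y != Root -> gtp x y -> part x = part y.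
Proof.
case: x => [|i j|i d b] //= _ y_ne.
  by case/nbr_cliq=> [y_root | [j' -> _] | [d' -> _]] //; rewrite y_root in y_ne.
by case/nbr_crown=> [[j -> _] | [d' -> _]].
Qed.

Lemma connect_part x y : connect (induced gtp [set~ Root]) x y -> part x = part y.
Proof.
case/connectP=> p walk ->; elim: p x walk => //= z p IHp x /andP[/and3P[xz x_ok z_ok] walk].
by rewrite -(IHp z walk); apply: gtp_part xz; rewrite -in_setC1.
Qed.

Lemma cut_vertex_root : cut_vertex gtp Root.
Proof.
have conn : connect gtp (Cliq ord0 ord0) (Cliq ord_max ord0).
  by apply: (@connect_trans _ _ Root); apply: connect1.
apply/existsP; exists (Cliq ord0 ord0); apply/existsP; exists (Cliq ord_max ord0).
by rewrite conn /=; apply/negP=> /connect_part.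
Qed.

Lemma blocks_at_root_ge : t <= #|blocks_at gtp Root|.
Proof.
by apply: (card_blocks_at_ge gtp_irr (f := fun i => Cliq i ord0)) => // i j /connect_part.
Qed.

Lemma card_blocks_at_root : #|blocks_at gtp Root| <= t.
Proof.
have := @card_blocks_at_le _ _ gtp_sym gtp_irr _ part Root; rewrite card_ord; apply.
move=> a b /nbr_root[i [j ->]] /nbr_root[i' [j' ->]] /= <-.
have [<- | jj] := eqVneq j j'; first exact: connect0.
by apply: connect_induced1; rewrite ?in_setC1 // /gtp /= eqxx jj.
Qed.

Lemma card_blocks_at_cliq i j : #|blocks_at gtp (Cliq i j)| <= t.
Proof.
have cliq_ok j' : j' != j -> Cliq i j' \in [set~ Cliq i j].
  by move=> jj; rewrite in_setC1; apply: contraNneq jj => -[->].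
have [m_eq1 | m_gt1] := eqVneq m0 0.
  (* For m = 1 the vertex [Cliq i j] is a cut vertex: its crown neighbours are separated. *)
  pose cls (x : vertex) : 'I_t := if x is Crown _ d _ then inord d.+1 else ord0.
  have := @card_blocks_at_le _ _ gtp_sym gtp_irr _ cls (Cliq i j); rewrite card_ord; apply.
  have no_cliq j' : j' != j -> False.
    move=> jj; have : (j' : nat) != j by [].
    by have := ltn_ord j; have := ltn_ord j'; lia.
  have cls_crown (d : 'I_n.+1) : d < i * m -> cls (Crown i d true) = d.+1 :> nat.
    by move=> d_lt; rewrite /= inordK //; have := part_end_le i; lia.
  move=> a b /nbr_cliq[-> | [j1 _ /no_cliq //] | [d1 -> d1_lt]];
    case/nbr_cliq=> [-> | [j2 _ /no_cliq //] | [d2 -> d2_lt]] /(congr1 (@nat_of_ord _));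
    rewrite ?cls_crown //= => -[/val_inj ->]; exact: connect0.
pose j2 : 'I_m := if j == ord0 then ord_max else ord0.
have j2j : j2 != j.
  rewrite /j2; have [-> | j_ne0] := eqVneq j ord0; last by rewrite eq_sym.
  by rewrite -val_eqE /=; lia.
have to_j2 a : gtp (Cliq i j) a -> connect (induced gtp [set~ Cliq i j]) a (Cliq i j2).
  case/nbr_cliq=> [-> | [j' -> jj'] | [d -> d_lt]].
  - by apply: connect_induced1; rewrite ?cliq_ok ?in_setC1.
  - have [-> | j'j2] := eqVneq j' j2; first exact: connect0.
    by apply: connect_induced1; rewrite ?cliq_ok // /gtp /= eqxx j'j2.
  - apply: connect_induced1; rewrite ?cliq_ok ?in_setC1 // /gtp /= ?eqxx ?d_lt //.
    by apply/eqP.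
apply: leq_trans (card_blocks_at_le1 gtp_sym gtp_irr _) _ => // a b ua ub.
by apply: connect_trans (to_j2 _ ua) _; rewrite (connect_inducedC gtp_sym) to_j2.
Qed.

Lemma card_blocks_at_crown i d b : #|blocks_at gtp (Crown i d b)| <= t.
Proof.
pose kind (x : vertex) := if x is Crown _ _ _ then true else false.
apply: leq_trans (card_blocks_at_le gtp_sym gtp_irr (cls := kind) _) _; last by rewrite card_bool.
move=> a a'.
have crown_ok d' b' : d' != d -> Crown i d' b' \in [set~ Crown i d b].
  by move=> dd; rewrite in_setC1; apply: contraNneq dd => -[->].
have cliq_ok j : Cliq i j \in [set~ Crown i d b] by rewrite in_setC1; apply/eqP.
have true_to_cliq d' : d' != d -> d' < i * m ->
    connect (induced gtp [set~ Crown i d b]) (Crown i d' true) (Cliq i ord0).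
  by move=> dd d_lt; apply: connect_induced1; rewrite ?crown_ok // /gtp /= eqxx d_lt.
have to_cliq d1 d2 : d1 != d2 -> d1 != d -> d2 != d -> d1 < i * m -> d2 < i * m ->
    connect (induced gtp [set~ Crown i d b]) (Crown i d1 (~~ b)) (Cliq i ord0).
  (* From side [false], W_i is reached through the other neighbour, on side [true]. *)
  move=> d12 d1d d2d d1_lt d2_lt; case: (~~ b); first exact: true_to_cliq.
  apply: connect_trans (connect_induced1 _ _ _) (true_to_cliq _ d2d d2_lt); rewrite ?crown_ok //.
  by rewrite /gtp /= eqxx d12 d1_lt d2_lt.
case/nbr_crown=> [[j1 -> _] | [d1 -> /and3P[d1d _ d1_lt]]];
  case/nbr_crown=> [[j2 -> _] | [d2 -> /and3P[d2d _ d2_lt]]] //= _.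
  have [<- | jj] := eqVneq j1 j2; first exact: connect0.
  by apply: connect_induced1; rewrite ?cliq_ok // /gtp /= eqxx jj.
have [<- | d12] := eqVneq d1 d2; first exact: connect0.
apply: connect_trans (to_cliq _ _ d12 d1d d2d d1_lt d2_lt) _.
by rewrite (connect_inducedC gtp_sym) (to_cliq d2 d1) // eq_sym.
Qed.

Lemma card_blocks_at_gtp x : #|blocks_at gtp x| <= t.
Proof.
case: x => [|i j|i d b];
  [exact: card_blocks_at_root | exact: card_blocks_at_cliq | exact: card_blocks_at_crown].
Qed.

Lemma delta_tilde_gtp : delta_tilde gtp = t.
Proof.
apply/eqP; rewrite eqn_leq; apply/andP; split.
  by apply/bigmax_leqP=> x _; apply: card_blocks_at_gtp.
apply: leq_trans blocks_at_root_ge _.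
exact: (@leq_bigmax_cond _ (cut_vertex gtp) (fun x => #|blocks_at gtp x|) _ cut_vertex_root).
Qed.

End Construction.

Theorem proposition6 :
  (forall (T : finType) (e : rel T),
      simple_graph e -> block_graph e -> has_cut_vertex e ->
      grundy_number e <= delta_tilde e * (omega e - 1) + 1)
  /\
  (forall t p : nat, 2 <= t -> 2 <= p ->
      exists (T : finType) (e : rel T),
        [/\ simple_graph e, delta_tilde e = t, omega e = p &
            grundy_number e = t * (p - 1) + 1]).
Proof.
split; first exact: grundy_number_block_graph.
move=> t p t_ge2 p_ge2.
have [t0 ->] : exists t0, t = t0.+2 by exists t.-2; lia.
have [m0 ->] : exists m0, p = m0.+2 by exists p.-2; lia.
exists (vertex t0 m0), (@gtp t0 m0); split.
- split; [exact: gtp_sym | exact: gtp_irr].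
- exact: delta_tilde_gtp.
- exact: omega_gtp.
- by rewrite grundy_number_gtp subn1 addn1.
Qed.
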